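(* Let $\mathcal C$ be a finite set of cycles and $m\ge1$. The following are equivalent: (i) $\big|\bigcup_{c\in\mathcal C}\Omega_m(c)\big|=\sum_{c\in\mathcal C}\mathrm{per}(c)$; (ii) the map $v\mapsto\mathrm{lbit}_m(v)$ is injective on $\bigcup_{c\in\mathcal C}\Omega_{m+1}(c)$; (iii) the map $v\mapsto\mathrm{hbit}_m(v)$ is injective on $\bigcup_{c\in\mathcal C}\Omega_{m+1}(c)$.
   Context: A periodic binary sequence $s:\mathbb Z\to\{0,1\}$ of least period $p$ determines the cycle $c=[s(0),\dots,s(p-1)]$ (all shifts of $s$ give the same cycle), with $\mathrm{per}(c)=p$. For such $c$, $\Omega_k(c)=\{(s(i),s((i+1)\bmod p),\dots,s((i+k-1)\bmod p)):0\le i<p\}\subseteq\{0,1\}^k$. For $v=(a_1,\dots,a_{m+1})\in\{0,1\}^{m+1}$, $\mathrm{hbit}_m(v)=(a_1,\dots,a_m)$ and $\mathrm{lbit}_m(v)=(a_2,\dots,a_{m+1})$. *)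

From mathcomp Require Import all_boot.
Set Implicit Arguments. Unset Strict Implicit. Unset Printing Implicit Defensive.

(* A binary word w = [s(0); ...; s(p-1)] represents the cycle of the
   p-periodic sequence s(i) = w[i mod p].  It represents a cycle of least
   period p = size w iff w is nonempty and no proper rotation fixes it. *)
Definition primitive (w : seq bool) : bool :=
  (0 < size w) && all (fun d => rot d w != w) (iota 1 (size w).-1).

Definition per (w : seq bool) : nat := size w.

Definition same_cycle (w w' : seq bool) : bool :=
  has (fun d => rot d w == w') (iota 0 (size w)).

Definition window (w : seq bool) (k i : nat) : seq bool :=
  [seq nth false w ((i + j) %% size w) | j <- iota 0 k].

Definition Omega (k : nat) (w : seq bool) : seq (seq bool) :=
  [seq window w k i | i <- iota 0 (size w)].

(* A finite set of cycles: a list of representatives, each of least period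
   its length, pairwise representing different cycles. *)
Definition cycle_set (C : seq (seq bool)) : Prop :=
  (forall w, w \in C -> primitive w) /\
  (forall i j, i < j < size C ->
     ~~ same_cycle (nth [::] C i) (nth [::] C j)).

Definition OmegaU (k : nat) (C : seq (seq bool)) : seq (seq bool) :=
  undup (flatten [seq Omega k w | w <- C]).

Definition hbit (m : nat) (v : seq bool) : seq bool := take m v.
Definition lbit (m : nat) (v : seq bool) : seq bool := drop 1 v.

Definition inj_on (f : seq bool -> seq bool) (A : seq (seq bool)) : Prop :=
  forall u v, u \in A -> v \in A -> f u = f v -> u = v.

From mathcomp Require Import all_boot zify.

Set Implicit Arguments.
Unset Strict Implicit.
Unset Printing Implicit Defensive.

(* Every word of OmegaU m C is the length-m window of some cycle c in C at
   some offset a < per(c), and (i) says that the pair (c, a) is determined by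
   the window.  Then an (m+1)-window is determined by either of its m-windows,
   which gives (ii) and (iii).  Conversely, injectivity of lbit (resp. hbit)
   lets an equality of m-windows propagate backward (resp. forward) along the
   cycles, hence, by periodicity, to all offsets: the two periodic sequences
   agree up to a shift.  Comparing periods shows that the cycles are
   rotations of each other, and primitivity then pins down the offset. *)

Definition pnth (w : seq bool) (n : nat) : bool := nth false w (n %% size w).

Definition is_period (T : Type) (f : nat -> T) (p : nat) : Prop :=
  forall n, f (n + p) = f n.

Definition distinct_windows (k : nat) (C : seq (seq bool)) : Prop :=
  forall c c' a b, c \in C -> c' \in C -> a < size c -> b < size c' ->
    window c k a = window c' k b -> c = c' /\ a = b.

Section Periods.

Variables (T : Type) (f g : nat -> T).

Lemma is_period_mull p t : is_period f p -> is_period f (t * p).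
Proof.
move=> fp n; elim: t => [|t IHt]; first by rewrite addn0.
by rewrite mulSnr addnA fp.
Qed.

Lemma shift_agree_period a b p q :
    (forall x, f (a + x) = g (b + x)) -> is_period g p ->
    0 < q -> is_period f q -> is_period f p.
Proof.
move=> fg gp q_gt0 fq.
have a_le : a <= a * q by rewrite leq_pmulr.
have fE n : f n = g (b + (n + a * q - a)).
  by rewrite -fg -(is_period_mull a fq n); congr f; lia.
by move=> n; rewrite !fE -(gp (b + (n + a * q - a))); congr g; lia.
Qed.

Lemma shift_agree_shift a b p :
    (forall x, f (a + x) = g (b + x)) -> is_period g p -> b <= p ->
  forall n, f (n + (a + (p - b))) = g n.
Proof.
move=> fg gp bp n; rewrite -gp.
have -> : n + p = b + (n + p - b) by lia.
by rewrite -fg; congr f; lia.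
Qed.

End Periods.

Lemma dvdn_shift_offset n a b : a < n -> b < n -> n %| a + (n - b) -> a = b.
Proof.
move=> an bn; case: (ltngtP a b) => // ab dv.
- have /dvdn_leq/(_ dv) : 0 < a + (n - b) by lia.
  lia.
- move: dv; rewrite (_ : a + (n - b) = a - b + n); last by lia.
  rewrite dvdn_addl // => /dvdn_leq; rewrite subn_gt0 => /(_ ab); lia.
Qed.

Lemma pnth_period w : is_period (pnth w) (size w).
Proof. by move=> n; rewrite /pnth modnDr. Qed.

Lemma nth_rot_pnth w d n : d <= size w -> n < size w ->
  nth false (rot d w) n = pnth w (n + d).
Proof.
move=> dw nw; rewrite /rot nth_cat size_drop /pnth.
case: ltnP => n_lt.
  by rewrite nth_drop modn_small; [congr nth|]; lia.
rewrite nth_take; last by lia.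
have -> : n + d = (n + d - size w) + size w by lia.
by rewrite modnDr modn_small; [congr nth|]; lia.
Qed.

Lemma primitive_period w d : primitive w -> is_period (pnth w) d -> size w %| d.
Proof.
case/andP=> w_gt0 /allP no_rot d_period; rewrite /dvdn; apply/contraT => r_neq0.
have r_lt : d %% size w < size w by rewrite ltn_mod.
have /no_rot/negP[] : d %% size w \in iota 1 (size w).-1.
  by rewrite mem_iota; move: (d %% size w) r_neq0 r_lt; lia.
apply/eqP/(eq_from_nth (x0 := false)); rewrite ?size_rot // => n nw.
rewrite nth_rot_pnth ?(ltnW r_lt) // /pnth modnDmr.
by rewrite -/(pnth w (n + d)) d_period /pnth modn_small.
Qed.

Lemma same_cycle_shift u v e : size u = size v -> 0 < size u ->
  (forall n, pnth u (n + e) = pnth v n) -> same_cycle u v.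
Proof.
move=> uv u_gt0 uvE; apply/hasP; exists (e %% size u).
  by rewrite mem_iota ltn_mod u_gt0.
apply/eqP/(eq_from_nth (x0 := false)); rewrite ?size_rot // => n nu.
have e_le : e %% size u <= size u by rewrite ltnW // ltn_mod.
rewrite nth_rot_pnth // /pnth modnDmr.
by rewrite -/(pnth u (n + e)) uvE /pnth -uv modn_small.
Qed.

Lemma same_cycle_refl w : 0 < size w -> same_cycle w w.
Proof. by move=> w_gt0; apply/hasP; exists 0; rewrite ?rot0 ?mem_iota. Qed.

Lemma same_cycle_sym u v : same_cycle u v -> same_cycle v u.
Proof.
case/hasP=> d; rewrite mem_iota add0n => /andP[_ du] /eqP <-.
apply/hasP; case: d du => [|d] du.
  by exists 0; rewrite !rot0 ?mem_iota ?add0n ?du.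
exists (size u - d.+1); first by rewrite mem_iota size_rot; lia.
by apply/eqP; have := rotK d.+1 u; rewrite /rotr size_rot.
Qed.

Lemma size_window w k i : size (window w k i) = k.
Proof. by rewrite size_map size_iota. Qed.

Lemma nth_window w k i j : j < k -> nth false (window w k i) j = pnth w (i + j).
Proof. by move=> jk; rewrite (nth_map 0) ?size_iota // nth_iota. Qed.

Lemma nth0_window w k i : 0 < k -> nth false (window w k i) 0 = pnth w i.
Proof. by move=> k_gt0; rewrite nth_window ?addn0. Qed.

Lemma eq_window w w' k i i' :
    (forall j, j < k -> pnth w (i + j) = pnth w' (i' + j)) ->
  window w k i = window w' k i'.
Proof.
move=> ww'; apply: (eq_from_nth (x0 := false)); rewrite !size_window // => j jk.
by rewrite !nth_window // ww'.
Qed.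

Lemma window_mod w k i : window w k (i %% size w) = window w k i.
Proof. by apply: eq_window => j _; rewrite /pnth modnDml. Qed.

Lemma window_addMn w k i t : window w k (i + t * size w) = window w k i.
Proof.
by apply: eq_window => j _; rewrite addnAC (is_period_mull t (pnth_period w)).
Qed.

Lemma drop_window w k i : drop 1 (window w k.+1 i) = window w k i.+1.
Proof.
apply: (eq_from_nth (x0 := false)); rewrite size_drop !size_window ?subn1 // => j jk.
by rewrite nth_drop !nth_window // addnCA.
Qed.

Lemma take_window w k i : take k (window w k.+1 i) = window w k i.
Proof.
apply: (eq_from_nth (x0 := false)); rewrite size_takel ?size_window // => j jk.
by rewrite nth_take // !nth_window // ltnW.
Qed.

Lemma OmegaUP k C v :
  reflect (exists w i, [/\ w \in C, i < size w & v = window w k i])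
          (v \in OmegaU k C).
Proof.
rewrite mem_undup; apply: (iffP allpairsPdep) => -[w [i [wC]]].
  by rewrite mem_iota => /andP[_ iw] ->; exists w, i.
by move=> iw ->; exists w, i; rewrite mem_iota.
Qed.

Lemma window_in_OmegaU k C w i : w \in C -> 0 < size w -> window w k i \in OmegaU k C.
Proof.
by move=> wC w_gt0; apply/OmegaUP; exists w, (i %% size w); rewrite ltn_mod window_mod.
Qed.

Lemma uniq_map_inj_in (T U : eqType) (f : T -> U) s :
  uniq (map f s) -> {in s &, injective f}.
Proof.
elim: s => //= x s IHs /andP[fx_notin u] y z; rewrite !inE.
case/orP=> [/eqP->|ys] /orP[/eqP->|zs] // fyz.
- by rewrite fyz map_f in fx_notin.
- by rewrite -fyz map_f in fx_notin.
- exact: IHs.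
Qed.

Lemma size_undup_eq (T : eqType) (s : seq T) : size (undup s) = size s <-> uniq s.
Proof.
split=> [eq_size|/undup_id -> //].
by apply/negPn; rewrite -ltn_size_undup eq_size ltnn.
Qed.

Lemma size_OmegaU k C : uniq C ->
  size (OmegaU k C) = \sum_(w <- C) per w <-> distinct_windows k C.
Proof.
move=> uC; set P := [seq (w, i) | w <- C, i <- iota 0 (size w)].
have memP w i : ((w, i) \in P) = (w \in C) && (i < size w).
  apply/allpairsPdep/andP => [[w' [i' [w'C]]]|[wC iw]].
    by rewrite mem_iota => /andP[_ i'w] [-> ->].
  by exists w, i; rewrite mem_iota.
have uP : uniq P.
  by apply: allpairs_uniq_dep => // [w _|[w i] [w' i'] _ _ /= [-> ->]]; rewrite ?iota_uniq.
have -> : \sum_(w <- C) per w = size P.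
  by rewrite size_allpairs_dep sumnE big_map; apply: eq_bigr => w _; rewrite size_iota.
pose win (q : seq bool * nat) := window q.1 k q.2.
rewrite /OmegaU /Omega -(map_allpairs win (@pair _ _)) -(size_map win P).
apply: iff_trans (size_undup_eq _) _; split=> [u c c' a b cC c'C ca c'b e|D].
  have /(_ (c, a) (c', b)) := uniq_map_inj_in u.
  by rewrite !memP cC c'C ca c'b => /(_ isT isT e) [-> ->].
rewrite map_inj_in_uniq // => -[c a] [c' b].
rewrite !memP => /andP[cC ca] /andP[c'C c'b] e.
by have [-> ->] := D c c' a b cC c'C ca c'b e.
Qed.

Lemma hbit_inj_of_distinct C m :
  distinct_windows m C -> inj_on (hbit m) (OmegaU m.+1 C).
Proof.
move=> D u v /OmegaUP[c [a [cC ca ->]]] /OmegaUP[c' [b [c'C c'b ->]]].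
rewrite /hbit !take_window => e.
by have [-> ->] := D _ _ _ _ cC c'C ca c'b e.
Qed.

Section CycleSet.

Variables (C : seq (seq bool)) (m : nat).
Hypothesis CS : cycle_set C.

Lemma cycle_set_primitive w : w \in C -> primitive w.
Proof. by case: CS => prim _; apply: prim. Qed.

Lemma cycle_set_size_gt0 w : w \in C -> 0 < size w.
Proof. by case/cycle_set_primitive/andP. Qed.

Lemma cycle_set_uniq : uniq C.
Proof.
apply: contraT => /(uniqPn [::])[i [j [ij jC eq_ij]]].
have w_gt0 : 0 < size (nth [::] C j) by rewrite cycle_set_size_gt0 // mem_nth.
by have := CS.2 i j; rewrite ij jC eq_ij same_cycle_refl // => /(_ isT).
Qed.

Lemma cycle_set_same_cycle c c' : c \in C -> c' \in C -> same_cycle c c' -> c = c'.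
Proof.
move=> cC c'C cc'; have [lt|gt|eq] := ltngtP (index c C) (index c' C).
- move: (CS.2 (index c C) (index c' C)).
  by rewrite lt index_mem c'C !nth_index // cc' => /(_ isT).
- move: (CS.2 (index c' C) (index c C)).
  by rewrite gt index_mem cC !nth_index // same_cycle_sym // => /(_ isT).
- by rewrite -(nth_index [::] cC) eq nth_index.
Qed.

Lemma cycle_set_shift_eq c c' a b : c \in C -> c' \in C -> a < size c -> b < size c' ->
  (forall x, pnth c (a + x) = pnth c' (b + x)) -> c = c' /\ a = b.
Proof.
move=> cC c'C ca c'b agree.
have agree' x : pnth c' (b + x) = pnth c (a + x) by rewrite agree.
have c_gt0 := cycle_set_size_gt0 cC; have c'_gt0 := cycle_set_size_gt0 c'C.
have eq_size : size c = size c'.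
  apply/eqP; rewrite eqn_dvd.
  rewrite (primitive_period (cycle_set_primitive cC)
             (shift_agree_period agree (pnth_period c') c_gt0 (pnth_period c))).
  by rewrite (primitive_period (cycle_set_primitive c'C)
                (shift_agree_period agree' (pnth_period c) c'_gt0 (pnth_period c'))).
have c'c : c' = c.
  apply/esym/cycle_set_same_cycle => //; apply: same_cycle_shift eq_size c_gt0 _.
  exact: shift_agree_shift agree (pnth_period c') (ltnW c'b).
subst c'; split=> //; apply: (dvdn_shift_offset ca c'b).
apply: (primitive_period (cycle_set_primitive cC)).
exact: (shift_agree_shift agree (pnth_period c) (ltnW c'b)).
Qed.

Lemma windows_agree_eq c c' a b : 0 < m -> c \in C -> c' \in C ->
    a < size c -> b < size c' ->
    (forall x, window c m (a + x) = window c' m (b + x)) -> c = c' /\ a = b.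
Proof.
move=> m_gt0 cC c'C ca c'b agree; apply: cycle_set_shift_eq => // x.
by rewrite -(nth0_window c (a + x) m_gt0) agree nth0_window.
Qed.

Lemma hbit_inj_window_succ c c' a b : inj_on (hbit m) (OmegaU m.+1 C) ->
    c \in C -> c' \in C ->
  window c m a = window c' m b -> window c m a.+1 = window c' m b.+1.
Proof.
move=> hinj cC c'C e.
rewrite -(drop_window c m a) -(drop_window c' m b); congr drop.
apply: hinj; rewrite /hbit ?take_window //.
- exact: window_in_OmegaU cC (cycle_set_size_gt0 cC).
- exact: window_in_OmegaU c'C (cycle_set_size_gt0 c'C).
Qed.

Lemma lbit_inj_window_pred c c' a b : inj_on (lbit m) (OmegaU m.+1 C) ->
    c \in C -> c' \in C ->
  window c m a.+1 = window c' m b.+1 -> window c m a = window c' m b.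
Proof.
move=> linj cC c'C e.
rewrite -(take_window c m a) -(take_window c' m b); congr take.
apply: linj; rewrite /lbit ?drop_window //.
- exact: window_in_OmegaU cC (cycle_set_size_gt0 cC).
- exact: window_in_OmegaU c'C (cycle_set_size_gt0 c'C).
Qed.

Lemma distinct_of_hbit_inj :
  0 < m -> inj_on (hbit m) (OmegaU m.+1 C) -> distinct_windows m C.
Proof.
move=> m_gt0 hinj c c' a b cC c'C ca c'b e; apply: windows_agree_eq => //.
by elim=> [|x IHx]; rewrite ?addn0 // !addnS; apply: hbit_inj_window_succ.
Qed.

Lemma distinct_of_lbit_inj :
  0 < m -> inj_on (lbit m) (OmegaU m.+1 C) -> distinct_windows m C.
Proof.
move=> m_gt0 linj c c' a b cC c'C ca c'b e; apply: windows_agree_eq => // x.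
have agree_back k i j :
    window c m (i + k) = window c' m (j + k) -> window c m i = window c' m j.
  elim: k i j => [|k IHk] i j; first by rewrite !addn0.
  by rewrite !addnS => /(lbit_inj_window_pred linj cC c'C)/IHk.
(* t is a common multiple of both periods, so shifting by t - x brings the
   offsets a + x and b + x back to a and b. *)
pose t := x * (size c * size c').
have x_le : x <= t by rewrite leq_pmulr // muln_gt0 !cycle_set_size_gt0.
apply: (agree_back (t - x)); rewrite -!addnA subnKC //.
by rewrite {1}/t mulnA mulnAC window_addMn /t mulnA window_addMn.
Qed.

Lemma lbit_inj_of_distinct :
  distinct_windows m C -> inj_on (lbit m) (OmegaU m.+1 C).
Proof.
move=> D u v /OmegaUP[c [a [cC ca ->]]] /OmegaUP[c' [b [c'C c'b ->]]].
rewrite /lbit !drop_window -(window_mod c m a.+1) -(window_mod c' m b.+1) => e.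
have [cc' ab] := D _ _ _ _ cC c'C (ltn_pmod _ (cycle_set_size_gt0 cC))
                    (ltn_pmod _ (cycle_set_size_gt0 c'C)) e.
subst c'; congr window; apply/eqP.
by rewrite -(modn_small ca) -(modn_small c'b) -(eqn_modDr 1) !addn1 ab.
Qed.

End CycleSet.

Theorem lemma5 (C : seq (seq bool)) (m : nat) :
  cycle_set C -> 1 <= m ->
  (size (OmegaU m C) = \sum_(w <- C) per w <-> inj_on (lbit m) (OmegaU m.+1 C)) /\
  (inj_on (lbit m) (OmegaU m.+1 C) <-> inj_on (hbit m) (OmegaU m.+1 C)).
Proof.
move=> CS m_gt0; have size_iff := size_OmegaU m (cycle_set_uniq CS).
split; split.
- by move/size_iff/(lbit_inj_of_distinct CS).
- by move/(distinct_of_lbit_inj CS m_gt0)/size_iff.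
- by move/(distinct_of_lbit_inj CS m_gt0)/hbit_inj_of_distinct.
- by move/(distinct_of_hbit_inj CS m_gt0)/(lbit_inj_of_distinct CS).
Qed.
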